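(* Let $D$ be a positive integer and let $H$ be a loopless multigraph such that each edge of $H$ shares at least one endpoint with all but at most $D-2$ of the other edges of $H$, and let $H_0$ be its underlying simple graph. (i) If $H_0$ is the complete graph $K_h$ with $h\ge 6$, then $|E(H)|\le \frac52(D-2)$. (ii) If $H_0$ is $K_h$ minus one edge with $h\ge 7$, then $|E(H)|\le \frac{20}{9}(D-2)$. (iii) If $H_0$ is $K_6$ minus one edge, then $|E(H)|\le \frac{22}{9}(D-2)$.
   Context: The underlying simple graph $H_0$ of a multigraph $H$ has vertex set $V(H)$ and an edge $vw$ whenever $H$ has at least one edge between $v$ and $w$. $K_h$ denotes the complete graph on $h$ vertices. *)

(* A finite loopless multigraph is given by a finite vertex
   type V, a finite edge type E and endpoint maps src tgt : E -> V
   (orientation irrelevant). *)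
From mathcomp Require Import all_boot all_order all_algebra.
Set Implicit Arguments. Unset Strict Implicit. Unset Printing Implicit Defensive.

Definition loopless (V E : finType) (src tgt : E -> V) : Prop :=
  forall e, src e != tgt e.

Definition share_endpoint (V E : finType) (src tgt : E -> V) (e f : E) : bool :=
  [|| src e == src f, src e == tgt f, tgt e == src f | tgt e == tgt f].

Definition n_disjoint (V E : finType) (src tgt : E -> V) (e : E) : nat :=
  #|[set f | (f != e) && ~~ share_endpoint src tgt e f]|.

Definition adj0 (V E : finType) (src tgt : E -> V) (v w : V) : bool :=
  [exists e, ((src e == v) && (tgt e == w)) || ((src e == w) && (tgt e == v))].

Definition underlying_is_K (V E : finType) (src tgt : E -> V) (h : nat) : Prop :=
  #|V| = h /\ forall v w, adj0 src tgt v w = (v != w).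

Definition underlying_is_K_minus_edge (V E : finType) (src tgt : E -> V) (h : nat)
  : Prop :=
  #|V| = h /\ exists a b : V, a != b /\
    forall v w, adj0 src tgt v w =
      (v != w) && ~~ (((v == a) && (w == b)) || ((v == b) && (w == a))).

(* If (u, v) is an edge of the underlying simple
   graph H_0, every edge of H avoiding both u and v is disjoint from an edge
   of H joining u and v, so at most K := D - 2 edges avoid (u, v).  For a
   family of sets of such ordered pairs of total size W, in which every edge
   of H avoids at least c pairs, counting the incidences "edge f avoids pair p"
   both ways gives c |E| <= W K (lemma double_count). *)

From mathcomp Require Import all_boot all_order all_algebra.
From mathcomp Require Import zify.
Set Implicit Arguments. Unset Strict Implicit. Unset Printing Implicit Defensive.
Import Order.TTheory GRing.Theory Num.Theory.

Lemma sum_indicator (T : finType) (P : pred T) :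
  \sum_(x : T) (P x : nat) = #|[set x | P x]|.
Proof.
by rewrite -sum1dep_card [RHS]big_mkcond /=; apply: eq_bigr => x _; case: (P x).
Qed.

Lemma card_setI_sum (T : finType) (A B : {set T}) :
  #|A :&: B| = \sum_(x in A) (x \in B : nat).
Proof.
rewrite -sum1_card (eq_bigl (fun x => (x \in A) && (x \in B))) => [|x]; last first.
  by rewrite inE.
by rewrite big_mkcondr /=; apply: eq_bigr => x _; case: (x \in B).
Qed.

Section PairCounting.
Variable T : finType.
Implicit Types (A B C : {set T}) (S : {set T * T}).

Definition offdiag : {set T * T} := [set p | p.1 != p.2].

Definition antiedge (a b : T) : {set T * T} := [set (a, b); (b, a)].

Lemma card_full_square S : #|S| = #|S :&: setX [set: T] [set: T]|.
Proof.
have -> : setX [set: T] [set: T] = [set: T * T] by apply/setP => -[x y]; rewrite !inE.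
by rewrite setIT.
Qed.

Lemma card_offdiag A : #|offdiag :&: setX A A| = #|A| * #|A| - #|A|.
Proof.
have diag_card : #|[set (x, x) | x in A]| = #|A|.
  by apply: card_imset => x y [].
have diag_def : [set (x, x) | x in A] = setX A A :\: offdiag.
  apply/setP => -[x y]; rewrite !inE /=; apply/imsetP/idP => [[z zA [-> ->]]|].
    by rewrite zA eqxx.
  by case/andP => /negbNE/eqP <- /andP [xA _]; exists x.
have := cardsID offdiag (setX A A); rewrite cardsX setIC -diag_def diag_card.
lia.
Qed.

Lemma card_antiedge_square a b A : a != b ->
  #|antiedge a b :&: setX A A| = 2 * ((a \in A) && (b \in A)).
Proof.
move=> ab; have [aA|aA] := boolP (a \in A); have [bA|bA] := boolP (b \in A) => /=.
- have -> : antiedge a b :&: setX A A = antiedge a b.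
    by apply/setIidPl/subsetP => p; rewrite !inE => /orP [] /eqP ->; rewrite /= ?aA ?bA.
  by rewrite cards2 xpair_eqE negb_and ab.
all: apply/eqP; rewrite cards_eq0; apply/eqP/setP => p; rewrite !inE.
all: case: eqP => [->|] /=; first by rewrite ?(negbTE aA) ?(negbTE bA) ?andbF.
all: case: eqP => [->|] /=; by rewrite ?(negbTE aA) ?(negbTE bA) ?andbF.
Qed.

Lemma card_offdiag_antiedge a b A : a != b ->
  #|(offdiag :\: antiedge a b) :&: setX A A|
    = #|A| * #|A| - #|A| - 2 * ((a \in A) && (b \in A)).
Proof.
move=> ab; rewrite -card_offdiag -card_antiedge_square // setIDAC.
have antiedge_sub : antiedge a b \subset offdiag.
  by apply/subsetP => p; rewrite !inE => /orP [] /eqP ->; rewrite //= eq_sym.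
rewrite -(cardsID (antiedge a b) (offdiag :&: setX A A)) setIAC.
by rewrite (setIidPr antiedge_sub) addKn.
Qed.

Lemma card_cross B C A : #|setX B C :&: setX A A| = #|B :&: A| * #|C :&: A|.
Proof.
have -> : setX B C :&: setX A A = setX (B :&: A) (C :&: A).
  by apply/setP => -[x y]; rewrite !inE /= andbACA.
by rewrite cardsX.
Qed.

Lemma card_pair_setI a b A : a != b -> #|[set a; b] :&: A| = (a \in A) + (b \in A).
Proof. by move=> ab; rewrite card_setI_sum big_setU1 ?big_set1 ?inE. Qed.

Lemma card_setCI B A : #|~: B :&: A| = #|A| - #|B :&: A|.
Proof. by rewrite setIC -setDE -(cardsID B A) [A :&: B]setIC addKn. Qed.

Lemma cross_sub a b :
  setX [set a; b] (~: [set a; b]) \subset offdiag :\: antiedge a b.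
Proof.
apply/subsetP => -[u v]; rewrite !inE /= negb_or => /andP [uab /andP [va vb]].
by rewrite !xpair_eqE (negbTE va) (negbTE vb) !andbF; case/orP: uab => /eqP ->;
  rewrite eq_sym.
Qed.

Lemma cross_sub_rev a b :
  setX (~: [set a; b]) [set a; b] \subset offdiag :\: antiedge a b.
Proof.
apply/subsetP => -[u v]; rewrite !inE /= negb_or => /andP [/andP [ua ub] vab].
by rewrite !xpair_eqE (negbTE ua) (negbTE ub); case/orP: vab => /eqP ->.
Qed.
End PairCounting.

Section DoubleCounting.
Variables (V E : finType) (src tgt : E -> V).

Definition ends (f : E) : {set V} := [set src f; tgt f].

Definition avoiding (f : E) : {set V * V} := setX (~: ends f) (~: ends f).

Lemma card_compl_ends f : loopless src tgt -> #|~: ends f| = #|V| - 2.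
Proof. by move=> loopl; have := cardsC (ends f); rewrite cards2 loopl; lia. Qed.

(* If u v are adjacent in H_0, the edges avoiding (u, v) are disjoint from an
   edge joining u and v, so there are at most K of them. *)
Lemma card_avoiding_le K (p : V * V) :
  (forall e, n_disjoint src tgt e <= K) -> adj0 src tgt p.1 p.2 ->
  #|[set f | p \in avoiding f]| <= K.
Proof.
case: p => u v hK /= /existsP [e uv_e]; apply: leq_trans (hK e).
apply: subset_leq_card; apply/subsetP => f; rewrite !inE /= !negb_or.
case/orP: uv_e => /andP [/eqP <- /eqP <-] /andP [/andP [sf tf] /andP [sf' tf']].
all: rewrite /share_endpoint; apply/andP; split; last by rewrite sf tf sf' tf'.
all: by apply/eqP => fe; move: sf sf'; rewrite fe !eqxx ?andbF.
Qed.

Lemma incidence_bound K (S : {set V * V}) :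
  (forall e, n_disjoint src tgt e <= K) -> {in S, forall p, adj0 src tgt p.1 p.2} ->
  \sum_(f : E) #|S :&: avoiding f| <= #|S| * K.
Proof.
move=> hK adjS; under eq_bigr => f _ do rewrite card_setI_sum.
rewrite exchange_big /= -sum_nat_const; apply: leq_sum => p pS.
by rewrite sum_indicator; apply: card_avoiding_le; last exact: adjS.
Qed.

Lemma double_count K c (Ss : seq {set V * V}) :
  (forall e, n_disjoint src tgt e <= K) ->
  (forall S, S \in Ss -> {in S, forall p, adj0 src tgt p.1 p.2}) ->
  (forall f, c <= \sum_(S <- Ss) #|S :&: avoiding f|) ->
  c * #|E| <= (\sum_(S <- Ss) #|S|) * K.
Proof.
move=> hK adjSs cover.
apply: (@leq_trans (\sum_(f : E) \sum_(S <- Ss) #|S :&: avoiding f|)).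
  by rewrite mulnC -sum_nat_const; apply: leq_sum => f _; exact: cover.
rewrite exchange_big big_distrl /= big_seq_cond [X in _ <= X]big_seq_cond.
by apply: leq_sum => S /andP [SSs _]; apply: incidence_bound; last exact: adjSs.
Qed.
End DoubleCounting.

Lemma ratio_transfer (c W p q N K : nat) :
  0 < c -> c * N <= W * K -> q * W <= p * c -> q * N <= p * K.
Proof. by move=> c_pos count ratio; rewrite -(leq_pmul2l c_pos); nia. Qed.

Lemma complete_ratio h : 6 <= h ->
  0 < (h - 2) * (h - 2) - (h - 2) /\
  2 * (h * h - h) <= 5 * ((h - 2) * (h - 2) - (h - 2)).
Proof. by move=> h6; split; nia. Qed.

Lemma K_minus_edge_ratio h : 7 <= h ->
  0 < (h - 2) * (h - 2) - (h - 2) - 2 /\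
  9 * (h * h - h - 2) <= 20 * ((h - 2) * (h - 2) - (h - 2) - 2).
Proof. by move=> h7; split; nia. Qed.

Section CompleteBound.
Variables (V E : finType) (src tgt : E -> V) (K : nat).
Hypotheses (loopl : loopless src tgt) (hK : forall e, n_disjoint src tgt e <= K).

Lemma complete_graph_bound h :
  6 <= h -> underlying_is_K src tgt h -> 2 * #|E| <= 5 * K.
Proof.
move=> h6 [hV hadj].
have adj_offdiag : {in offdiag V, forall p, adj0 src tgt p.1 p.2}.
  by move=> p; rewrite inE hadj.
have count : ((h - 2) * (h - 2) - (h - 2)) * #|E| <= (h * h - h) * K.
  have := @double_count _ _ src tgt K _ [:: offdiag V] hK.
  rewrite big_seq1 card_full_square card_offdiag cardsT hV; apply.
    by move=> S; rewrite mem_seq1 => /eqP ->; exact: adj_offdiag.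
  by move=> f; rewrite big_seq1 card_offdiag card_compl_ends // hV.
by have [c_pos ratio] := complete_ratio h6; apply: (ratio_transfer c_pos count ratio).
Qed.
End CompleteBound.

Section KMinusEdgeBounds.
Variables (V E : finType) (src tgt : E -> V) (K : nat) (a b : V).
Hypotheses (loopl : loopless src tgt) (hK : forall e, n_disjoint src tgt e <= K).
Hypotheses (ab : a != b) (hadj : forall v w, adj0 src tgt v w =
      (v != w) && ~~ (((v == a) && (w == b)) || ((v == b) && (w == a)))).

Lemma K_minus_edge_adj :
  {in offdiag V :\: antiedge a b, forall p, adj0 src tgt p.1 p.2}.
Proof. by move=> [u v]; rewrite !inE /= !xpair_eqE hadj andbC. Qed.

Lemma ends_not_missing_edge f : ~~ ((a \in ends src tgt f) && (b \in ends src tgt f)).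
Proof.
have : adj0 src tgt (src f) (tgt f) by apply/existsP; exists f; rewrite !eqxx.
rewrite hadj !inE => /andP [_ not_ab]; apply/negP => /andP [ha hb].
move: ab not_ab; case/orP: ha => /eqP ->; case/orP: hb => /eqP ->.
all: by rewrite ?eqxx ?orbT.
Qed.

Lemma K_minus_edge_bound h : 7 <= h -> #|V| = h -> 9 * #|E| <= 20 * K.
Proof.
move=> h7 hV.
have count : ((h - 2) * (h - 2) - (h - 2) - 2) * #|E| <= (h * h - h - 2) * K.
  have := @double_count _ _ src tgt K _ [:: offdiag V :\: antiedge a b] hK.
  rewrite big_seq1 card_full_square card_offdiag_antiedge // cardsT !in_setT hV.
  apply; first by move=> S; rewrite mem_seq1 => /eqP ->; exact: K_minus_edge_adj.
  move=> f; rewrite big_seq1 card_offdiag_antiedge // card_compl_ends // hV.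
  by rewrite leq_sub2l // (leq_mul (leqnn 2) (leq_b1 _)).
have [c_pos ratio] := K_minus_edge_ratio h7.
exact: (ratio_transfer c_pos count ratio).
Qed.

(* For h = 6 the pairs crossing B = {a, b} are added with weight one in each
   direction: an edge meeting B in one vertex avoids 12 + 3 + 3 weighted
   pairs, an edge missing B avoids 10 + 4 + 4, out of 28 + 8 + 8 in total. *)
Lemma K6_minus_edge_bound : #|V| = 6 -> 9 * #|E| <= 22 * K.
Proof.
move=> hV; set B := [set a; b].
have count : 18 * #|E| <= 44 * K.
  have := @double_count _ _ src tgt K 18
    [:: offdiag V :\: antiedge a b; setX B (~: B); setX (~: B) B] hK.
  rewrite !big_cons big_nil (card_full_square (offdiag V :\: _)).
  rewrite (card_full_square (setX B _)) (card_full_square (setX _ B)).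
  rewrite card_offdiag_antiedge // !card_cross card_setCI card_pair_setI //.
  rewrite cardsT !in_setT hV; apply.
    move=> S; rewrite !inE => /or3P [] /eqP -> p pS; apply: K_minus_edge_adj => //.
      exact: subsetP (cross_sub a b) p pS.
    exact: subsetP (cross_sub_rev a b) p pS.
  move=> f; rewrite !big_cons big_nil card_offdiag_antiedge // !card_cross.
  rewrite card_setCI card_pair_setI // card_compl_ends // hV !inE.
  by move: (ends_not_missing_edge f); rewrite !inE; case: (_ || _); case: (_ || _).
by apply: (ratio_transfer _ count).
Qed.
End KMinusEdgeBounds.

Lemma complete_has_edge (V E : finType) (src tgt : E -> V) h :
  2 <= h -> underlying_is_K src tgt h -> exists u v, adj0 src tgt u v.
Proof.
move=> h2 [hV hadj]; have /card_gt1P [u [v [_ _ uv]]] : 1 < #|V| by rewrite hV.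
by exists u, v; rewrite hadj.
Qed.

Lemma K_minus_edge_has_edge (V E : finType) (src tgt : E -> V) h :
  3 <= h -> underlying_is_K_minus_edge src tgt h -> exists u v, adj0 src tgt u v.
Proof.
move=> h3 [hV [a [b [ab hadj]]]].
have /card_gt0P [c cB] : 0 < #|~: [set a; b]|.
  by have := cardsC [set a; b]; rewrite cards2 ab hV; lia.
exists a, c; apply: (K_minus_edge_adj hadj (x := (a, c))).
by apply: (subsetP (cross_sub a b)); rewrite inE /= cB set21.
Qed.

Lemma nat_bound_to_rat (q p N D : nat) : (2 <= D)%N -> (0 < q)%N ->
  (q * N <= p * (D - 2))%N -> (N%:R <= p%:R / q%:R * (D%:R - 2%:R) :> rat)%R.
Proof.
move=> D2 q_pos bound; rewrite -natrB // mulrAC ler_pdivlMr ?ltr0n //.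
by rewrite -!natrM ler_nat mulnC.
Qed.

Theorem mainTheorem6 (D : nat) (V E : finType) (src tgt : E -> V) :
  (0 < D)%N ->
  loopless src tgt ->
  (forall e : E, ((n_disjoint src tgt e)%:Z <= D%:Z - 2)%R) ->
  ((forall h : nat, (6 <= h)%N -> underlying_is_K src tgt h ->
      (#|E|%:R <= (5%:R / 2%:R) * (D%:R - 2%:R) :> rat)%R)
   /\ (forall h : nat, (7 <= h)%N -> underlying_is_K_minus_edge src tgt h ->
      (#|E|%:R <= (20%:R / 9%:R) * (D%:R - 2%:R) :> rat)%R)
   /\ (underlying_is_K_minus_edge src tgt 6 ->
      (#|E|%:R <= (22%:R / 9%:R) * (D%:R - 2%:R) :> rat)%R)).
Proof.
move=> _ loopl hD.
have hK e : (n_disjoint src tgt e <= D - 2)%N by have := hD e; lia.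
have D_ge2 : (exists u v, adj0 src tgt u v) -> (2 <= D)%N.
  by case=> u [v /existsP [e _]]; have := hD e; lia.
split; [|split].
- move=> h h6 hKh; apply: nat_bound_to_rat => //.
    by apply/D_ge2/(complete_has_edge _ hKh); lia.
  exact: (complete_graph_bound loopl hK h6 hKh).
- move=> h h7 hKh; apply: nat_bound_to_rat => //.
    by apply/D_ge2/(K_minus_edge_has_edge _ hKh); lia.
  case: hKh => hV [a [b [ab hadj]]].
  exact: (K_minus_edge_bound loopl hK ab hadj h7 hV).
- move=> hKh; apply: nat_bound_to_rat => //.
    exact/D_ge2/(K_minus_edge_has_edge _ hKh).
  case: hKh => hV [a [b [ab hadj]]].
  exact: (K6_minus_edge_bound loopl hK ab hadj hV).
Qed.
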